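(* Let $F/\mathbb{F}_q$ be a function field of genus $g$ with full constant field $\mathbb{F}_q$, $\sigma\in\mathrm{Aut}(F/\mathbb{F}_q)$, $N,m,l$ positive integers, $P_1,\dots,P_N$ rational places such that the $mN$ places $P_i^{\sigma^j}$ ($1\le i\le N$, $0\le j\le m-1$) are pairwise distinct rational places, and $D$ a divisor of degree $e$ with $D^\sigma=D$ and no $P_i^{\sigma^j}$ in $\mathrm{Supp}(D)$. Let $1\le s\le m$, let $\mathbf{y}=(y_{i,j})\in\mathbb{F}_q^{m\times N}$ ($1\le i\le N$, $1\le j\le m$), let \[\kappa=\left\lfloor\frac{N(m-s+1)-el+(s+1)(g-1)+1}{e(s+1)}\right\rfloor,\] and let $A_0\in\mathcal{L}((\kappa+l)D)$, $A_1,\dots,A_s\in\mathcal{L}(\kappa D)$ satisfy \[A_0(P_i^{\sigma^j})+A_1(P_i^{\sigma^j})y_{i,j+1}+\cdots+A_s(P_i^{\sigma^j})y_{i,j+s}=0\quad\text{for all }1\le i\le N,\ 0\le j\le m-s.\] If $f\in\mathcal{L}(lD)$ is such that the encoding $\pi(f)=\big((f(P_i),f(P_i^{\sigma}),\dots,f(P_i^{\sigma^{m-1}}))^T\big)_{i=1}^N$ agrees with $\mathbf{y}$ in at least $t$ columns (i.e., for at least $t$ indices $i$ one has $y_{i,j+1}=f(P_i^{\sigma^j})$ for all $0\le j\le m-1$), where $t>\frac{(\kappa+l)e}{m-s+1}$, then \[A_0+A_1f+A_2f^{\sigma^{-1}}+\cdots+A_sf^{\sigma^{-(s-1)}}=0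 .\]
   Context: For a place $P$ and $f\in F$ with $\nu_P(f)\ge 0$, $f(P)$ denotes the residue class of $f$ at $P$. For $\phi\in\mathrm{Aut}(F/\mathbb{F}_q)$, $f^{\phi}$ denotes the image of $f$ under $\phi$, $P^{\phi}=\{\phi(x):x\in P\}$, and $G^{\phi}=\sum m_PP^{\phi}$ for a divisor $G=\sum m_PP$; with these conventions $f(P^{\phi})=f^{\phi^{-1}}(P)$ whenever both sides are defined. $\mathcal{L}(G)=\{f\in F^*:\mathrm{div}(f)+G\ge 0\}\cup\{0\}$. *)

(* Algebraic function fields F/F_q set up from scratch:
   places are represented by their normalized discrete valuations. *)
From HB Require Import structures.
From mathcomp Require Import all_boot all_order all_algebra.
Set Implicit Arguments. Unset Strict Implicit. Unset Printing Implicit Defensive.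
Import Order.TTheory GRing.Theory Num.Theory.
Local Open Scope ring_scope.

Section FunctionFields.
Variables (K : finFieldType) (F : fieldType) (iota : {rmorphism K -> F}).

Definition transcendental (x : F) : Prop :=
  forall p : {poly K}, p != 0 -> (map_poly iota p).[x] != 0.

(* F/K is an algebraic function field in one variable: F is a finite
   extension of a rational function field K(x), x transcendental. *)
Definition is_function_field : Prop :=
  exists x : F, transcendental x /\
  exists (n : nat) (b : 'I_n -> F), forall z : F,
    exists (q : {poly K}) (p : 'I_n -> {poly K}),
      (map_poly iota q).[x] != 0 /\
      z * (map_poly iota q).[x] = \sum_(i < n) (map_poly iota (p i)).[x] * b i.

Definition full_constant_field : Prop :=
  forall z : F, (exists p : {poly K}, p != 0 /\ (map_poly iota p).[z] = 0) ->
    exists c : K, z = iota c.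

(* A place P of F/K, represented by its normalized discrete valuation v_P
   (with the convention v_P 0 = 0 in place of +oo). *)
Definition is_place (v : F -> int) : Prop :=
  [/\ v 0 = 0,
      (forall x y, x != 0 -> y != 0 -> v (x * y) = v x + v y),
      (forall x y, x != 0 -> y != 0 -> x + y != 0 -> Order.min (v x) (v y) <= v (x + y)),
      (exists t, v t = 1)
    & (forall c : K, c != 0 -> v (iota c) = 0)].

Definition inP (v : F -> int) (z : F) : bool := (z == 0) || (0 < v z).

(* rational place: residue field O_P/P equals K *)
Definition rational_place (v : F -> int) : Prop :=
  is_place v /\ forall z, 0 <= v z -> exists c : K, inP v (z - iota c).

(* residue class z(P) for a rational place (meaningful when v z >= 0) *)
Definition residue (v : F -> int) (z : F) : K :=
  odflt 0 [pick c : K | inP v (z - iota c)].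

(* deg P = [O_P/P : K] = n *)
Definition place_deg (v : F -> int) (n : nat) : Prop :=
  exists b : 'I_n -> F, (forall i, 0 <= v (b i)) /\
    (forall z, 0 <= v z -> exists c : 'I_n -> K,
        inP v (z - \sum_(i < n) iota (c i) * b i)) /\
    (forall c : 'I_n -> K, inP v (\sum_(i < n) iota (c i) * b i) ->
        forall i, c i = 0).

(* Divisors: functions from places (valuations) to int with finite support. *)
Definition divisor := (F -> int) -> int.

Definition div_deg (G : divisor) (e : int) : Prop :=
  exists (n : nat) (ps : 'I_n -> (F -> int)) (ds : 'I_n -> nat),
    injective ps /\ (forall i, is_place (ps i) /\ place_deg (ps i) (ds i)) /\
    (forall v, G v != 0 -> exists i, v = ps i) /\
    e = \sum_(i < n) G (ps i) * (ds i)%:Z.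

Definition scale_div (k : int) (G : divisor) : divisor := fun v => k * G v.

Definition inL (G : divisor) (f : F) : Prop :=
  f = 0 \/ forall v, is_place v -> 0 <= v f + G v.

Definition ell (G : divisor) (n : nat) : Prop :=
  exists b : 'I_n -> F, (forall i, inL G (b i)) /\
    (forall c : 'I_n -> K, \sum_(i < n) iota (c i) * b i = 0 -> forall i, c i = 0) /\
    (forall z, inL G z -> exists c : 'I_n -> K, z = \sum_(i < n) iota (c i) * b i).

Definition is_genus (g : nat) : Prop :=
  (exists G a n, div_deg G a /\ ell G n /\ a - n%:Z + 1 = g%:Z) /\
  (forall G a n, div_deg G a -> ell G n -> a - n%:Z + 1 <= g%:Z).

End FunctionFields.

Definition kappa (N m l s g : nat) (e : int) : int :=
  Num.floor (((N%:Z * (m - s + 1)%:Z - e * l%:Z + (s.+1)%:Z * (g%:Z - 1) + 1)%:~R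
              / (e * (s.+1)%:Z)%:~R : rat)).

(* Put Z := A_0 + A_1 f + A_2 f^(sigma^-1) + ... + A_s f^(sigma^-(s-1)).  Since D is
   sigma-invariant, f^(sigma^-k) lies in L(lD), so Z lies in L((kappa+l)D).  If column i
   of y agrees with the encoding of f, then at P_i^(sigma^j), 0 <= j <= m-s, the residue
   of Z is the left-hand side of the j-th interpolation equation, hence Z vanishes at
   these (m-s+1) t places, none of which is in Supp D.  Thus Z lies in
   L((kappa+l)D - sum P_i^(sigma^j)), whose degree (kappa+l)e - (m-s+1)t is negative.
   A Riemann-Roch space of negative degree is zero: if 0 <> z in L(G) with deg G < 0,
   multiplication by z embeds L(G_0 - G) into L(G_0) for a divisor G_0 realising the
   genus, and then deg (G_0 - G) - l(G_0 - G) + 1 exceeds the genus.  The particular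
   value of kappa is never used: only the lower bound on t enters the degree count. *)

From HB Require Import structures.
From mathcomp Require Import all_boot all_order all_algebra.
From mathcomp Require Import boolp zify ring.
Set Implicit Arguments. Unset Strict Implicit. Unset Printing Implicit Defensive.
Import Order.TTheory GRing.Theory Num.Theory.
Local Open Scope ring_scope.

Section Valuation.
Variables (K : finFieldType) (F : fieldType) (iota : {rmorphism K -> F}).

(* [v z >= k], where [z = 0] is split off because places encode v(0) = +oo as v 0 = 0. *)
Definition val_ge (v : F -> int) (k : int) (z : F) := z = 0 \/ k <= v z.

Definition is_residue (v : F -> int) (z : F) (c : K) := val_ge v 1 (z - iota c).

Variable v : F -> int.

Lemma inPP z : reflect (val_ge v 1 z) (inP v z).
Proof.
apply: (iffP orP) => [[/eqP->|hz]|[->|hz]]; [by left | right; lia | by left | ].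
by right; lia.
Qed.

Hypothesis v_place : is_place iota v.

Lemma valM x y : x != 0 -> y != 0 -> v (x * y) = v x + v y.
Proof. by case: v_place => _ vM _ _ _; apply: vM. Qed.

Lemma val_iota c : c != 0 -> v (iota c) = 0.
Proof. by case: v_place => _ _ _ _; apply. Qed.

Lemma val_geD k a b : val_ge v k a -> val_ge v k b -> val_ge v k (a + b).
Proof.
case=> [->|ha]; first by rewrite add0r.
case=> [->|hb]; first by rewrite addr0; right.
have [->|ab0] := eqVneq (a + b) 0; first by left.
have [->|a0] := eqVneq a 0; first by rewrite add0r; right.
have [->|b0] := eqVneq b 0; first by rewrite addr0; right.
case: v_place => _ _ vD _ _; right; apply: le_trans (vD _ _ a0 b0 ab0).
by rewrite le_min ha hb.
Qed.

Lemma val_geM k1 k2 a b :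
  val_ge v k1 a -> val_ge v k2 b -> val_ge v (k1 + k2) (a * b).
Proof.
case=> [->|ha]; first by rewrite mul0r; left.
case=> [->|hb]; first by rewrite mulr0; left.
have [->|a0] := eqVneq a 0; first by rewrite mul0r; left.
have [->|b0] := eqVneq b 0; first by rewrite mulr0; left.
by right; rewrite valM // lerD.
Qed.

Lemma val_ge_iota c : val_ge v 0 (iota c).
Proof.
by have [->|c0] := eqVneq c 0; [rewrite rmorph0; left | right; rewrite val_iota].
Qed.

Lemma val_ge_iotaM k c z : val_ge v k z -> val_ge v k (iota c * z).
Proof. by move=> hz; rewrite -[k]add0r; apply: val_geM hz; apply: val_ge_iota. Qed.

Lemma val_ge_sum (I : eqType) (r : seq I) k (E : I -> F) :
  (forall i, i \in r -> val_ge v k (E i)) -> val_ge v k (\sum_(i <- r) E i).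
Proof. by move=> hE; rewrite big_seq; apply: big_ind => //; [left | apply: val_geD]. Qed.

Lemma is_residueD a b ca cb :
  is_residue v a ca -> is_residue v b cb -> is_residue v (a + b) (ca + cb).
Proof.
move=> ha hb; rewrite /is_residue rmorphD.
have -> : a + b - (iota ca + iota cb) = (a - iota ca) + (b - iota cb) by ring.
exact: val_geD.
Qed.

Lemma is_residueM a b ca cb : val_ge v 0 b ->
  is_residue v a ca -> is_residue v b cb -> is_residue v (a * b) (ca * cb).
Proof.
move=> b_ge0 ha hb; rewrite /is_residue rmorphM.
have -> : a * b - iota ca * iota cb = (a - iota ca) * b + iota ca * (b - iota cb)
  by ring.
by apply: val_geD; [rewrite -[1]addr0; apply: val_geM | apply: val_ge_iotaM].
Qed.

Lemma is_residue_sum (I : eqType) (r : seq I) (E : I -> F) (c : I -> K) :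
  (forall i, i \in r -> is_residue v (E i) (c i)) ->
  is_residue v (\sum_(i <- r) E i) (\sum_(i <- r) c i).
Proof.
move=> hE; rewrite !big_seq; apply: (big_ind2 (is_residue v)) => //.
  by rewrite /is_residue rmorph0 subr0; left.
by move=> x1 x2 y1 y2; apply: is_residueD.
Qed.

End Valuation.

Lemma residueP (K : finFieldType) (F : fieldType) (iota : {rmorphism K -> F}) v z :
  rational_place iota v -> val_ge v 0 z -> is_residue iota v z (residue iota v z).
Proof.
case=> v_place res_v z_ge0.
have [c hc] : exists c : K, inP v (z - iota c).
  by case: z_ge0 => [->|/res_v //]; exists 0; rewrite rmorph0 subr0 /inP eqxx.
rewrite /residue; case: pickP => [c' /= /inPP //|no_res].
by have := no_res c; rewrite /= hc.
Qed.

Section InverseAutomorphism.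
Variables (K : finFieldType) (F : fieldType) (iota : {rmorphism K -> F}).
Variables (sigma : {rmorphism F -> F}) (tau : F -> F).
Hypotheses (sigmaK : cancel sigma tau) (tauK : cancel tau sigma)
  (sigma_iota : forall c : K, sigma (iota c) = iota c).

HB.instance Definition _ :=
  GRing.isZmodMorphism.Build F F tau (can2_zmod_morphism sigmaK tauK).
HB.instance Definition _ :=
  GRing.isMonoidMorphism.Build F F tau (can2_monoid_morphism sigmaK tauK).

Lemma tau_iota c : tau (iota c) = iota c.
Proof. by apply: (can_inj sigmaK); rewrite tauK sigma_iota. Qed.

Lemma iter_tau0 n : iter n tau 0 = 0.
Proof. by elim: n => //= n ->; rewrite rmorph0. Qed.

Lemma iter_tauB_iota n z c : iter n tau (z - iota c) = iter n tau z - iota c.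
Proof. by elim: n => //= n ->; rewrite rmorphB /= tau_iota. Qed.

Lemma place_tau v : is_place iota v -> is_place iota (fun z => v (tau z)).
Proof.
case=> v0 vM vD [t vt] v_iota; split.
- by rewrite rmorph0.
- by move=> x y x0 y0; rewrite rmorphM vM ?fmorph_eq0.
- by move=> x y x0 y0 xy0; rewrite rmorphD vD ?fmorph_eq0 -?rmorphD ?fmorph_eq0.
- by exists (sigma t); rewrite sigmaK.
- by move=> c c0; rewrite tau_iota v_iota.
Qed.

Lemma place_iter_tau v n :
  is_place iota v -> is_place iota (fun z => v (iter n tau z)).
Proof.
move=> v_place; elim: n => // n /place_tau.
by congr is_place; apply: funext => z; rewrite iterSr.
Qed.

Lemma div_iter_tau (D : divisor F) :
  (forall v, is_place iota v -> D (fun z => v (tau z)) = D v) ->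
  forall v n, is_place iota v -> D (fun z => v (iter n tau z)) = D v.
Proof.
move=> D_inv v n v_place; elim: n => // n <-.
rewrite -(D_inv _ (place_iter_tau n v_place)).
by congr D; apply: funext => z; rewrite iterSr.
Qed.

Lemma val_ge_iter_tau v a b k z :
  val_ge (fun z => v (iter (a + b) tau z)) k z ->
  val_ge (fun z => v (iter a tau z)) k (iter b tau z).
Proof. by case=> [->|hz]; [rewrite iter_tau0; left | right; rewrite -iterD]. Qed.

Lemma is_residue_iter_tau v a b z c :
  is_residue iota (fun z => v (iter (a + b) tau z)) z c ->
  is_residue iota (fun z => v (iter a tau z)) (iter b tau z) c.
Proof.
rewrite /is_residue -iter_tauB_iota.
by case=> [->|hz]; [rewrite iter_tau0; left | right; rewrite -iterD].
Qed.

End InverseAutomorphism.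

Lemma big_support_seq (T : eqType) (h : T -> int) (s1 s2 : seq T) :
  uniq s1 -> uniq s2 ->
  (forall x, h x != 0 -> x \in s1) -> (forall x, h x != 0 -> x \in s2) ->
  \sum_(x <- s1) h x = \sum_(x <- s2) h x.
Proof.
move=> u1 u2 h1 h2.
rewrite (bigID (fun x => h x != 0)) /= [X in _ + X]big1 ?addr0; last by move=> x /negPn/eqP.
rewrite [RHS](bigID (fun x => h x != 0)) /= [X in _ + X]big1 ?addr0; last by move=> x /negPn/eqP.
rewrite -big_filter -[RHS]big_filter; apply/perm_big/uniq_perm; rewrite ?filter_uniq //.
move=> x; rewrite !mem_filter; have [//|hx /=] := eqVneq (h x) 0.
by rewrite (h1 _ hx) (h2 _ hx).
Qed.

Section Degree.
Variables (K : finFieldType) (F : fieldType) (iota : {rmorphism K -> F}).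

Lemma place_deg_le v n1 n2 : is_place iota v ->
  place_deg iota v n1 -> place_deg iota v n2 -> (n1 <= n2)%N.
Proof.
move=> v_place [b1 [b1_ge0 [_ b1_free]]] [b2 [_ [b2_span _]]].
have /all_sig [c c_res] i : {c : 'I_n2 -> K | val_ge v 1 (b1 i - \sum_j iota (c j) * b2 j)}.
  by apply/cid; have [c /inPP] := b2_span _ (b1_ge0 i); exists c.
pose C := \matrix_(i < n1, j < n2) c i j.
suff : row_free C by rewrite -row_leq_rank => /leq_trans; apply; apply: rank_leq_col.
apply: inj_row_free => x xC0; apply/rowP => k; rewrite mxE.
suff /b1_free-> : inP v (\sum_i iota (x 0 i) * b1 i) by [].
have -> : \sum_i iota (x 0 i) * b1 i =
    \sum_i iota (x 0 i) * (b1 i - \sum_j iota (c i j) * b2 j)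
    + \sum_j iota ((x *m C) 0 j) * b2 j.
  under [X in _ = _ + X]eq_bigr => j _ do rewrite !mxE rmorph_sum mulr_suml.
  rewrite exchange_big -big_split /=; apply: eq_bigr => i _.
  rewrite mulrBr mulr_sumr.
  by under [X in _ = _ + X]eq_bigr => j _ do rewrite mxE rmorphM -mulrA; rewrite subrK.
rewrite xC0 [X in _ + X]big1 ?addr0; last by move=> j _; rewrite mxE rmorph0 mul0r.
by apply/inPP/(val_ge_sum v_place) => i _; apply: val_ge_iotaM.
Qed.

(* Junk value 0 when v has no degree. *)
Definition pdeg (v : F -> int) : nat :=
  if pselect (exists n, place_deg iota v n) is left h then projT1 (cid h) else 0.

Lemma pdegE v n : is_place iota v -> place_deg iota v n -> pdeg v = n.
Proof.
move=> v_place hn; rewrite /pdeg; case: pselect => [h|]; last by case; exists n.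
have hd := projT2 (cid h); apply/eqP; rewrite eqn_leq.
by rewrite !(place_deg_le v_place hd hn, place_deg_le v_place hn hd).
Qed.

Lemma pdegP v : (exists n, place_deg iota v n) -> place_deg iota v (pdeg v).
Proof. by move=> h; rewrite /pdeg; case: pselect => [h'|//]; apply: (projT2 (cid h')). Qed.

Lemma rational_place_deg1 v : rational_place iota v -> place_deg iota v 1.
Proof.
case=> v_place v_res; exists (fun _ => 1); split; [|split].
- by move=> _; rewrite -(rmorph1 iota) val_iota ?oner_eq0.
- by move=> z /v_res [c hc]; exists (fun _ => c); rewrite big_ord1 mulr1.
- move=> c; rewrite big_ord1 mulr1 => hc i; rewrite ord1.
  apply/eqP; apply: contraLR hc => c0.
  by rewrite /inP negb_or fmorph_eq0 c0 val_iota // ltxx.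
Qed.

Definition places_with_degree (s : seq (F -> int)) :=
  forall p, p \in s -> is_place iota p /\ exists n, place_deg iota p n.

Lemma div_deg_support (G : divisor F) e : div_deg iota G e ->
  exists s, [/\ uniq s, places_with_degree s & forall v, G v != 0 -> v \in s].
Proof.
case=> n [ps [ds [ps_inj [ps_deg [ps_supp _]]]]].
exists (map ps (enum 'I_n)); split.
- by rewrite map_inj_uniq ?enum_uniq.
- by move=> _ /mapP[i _ ->]; have [? ?] := ps_deg i; split => //; exists (ds i).
- by move=> v /ps_supp[i ->]; rewrite map_f ?mem_enum.
Qed.

Lemma div_deg_sum (G : divisor F) e s : div_deg iota G e ->
  uniq s -> (forall v, G v != 0 -> v \in s) ->
  e = \sum_(p <- s) G p * (pdeg p)%:Z.
Proof.
move=> [n [ps [ds [ps_inj [ps_deg [ps_supp ->]]]]]] s_uniq s_supp.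
have -> : \sum_(i < n) G (ps i) * (ds i)%:Z = \sum_(p <- map ps (enum 'I_n)) G p * (pdeg p)%:Z.
  rewrite big_map big_enum; apply: eq_bigr => i _.
  by have [? ?] := ps_deg i; rewrite (@pdegE _ (ds i)).
apply: big_support_seq => //.
- by rewrite map_inj_uniq ?enum_uniq.
- move=> v; have [->|/ps_supp[i ->] _] := eqVneq (G v) 0; first by rewrite mul0r eqxx.
  by rewrite map_f ?mem_enum.
- by move=> v; have [->|/s_supp //] := eqVneq (G v) 0; rewrite mul0r eqxx.
Qed.

Lemma div_deg_of_seq (G : divisor F) s : uniq s -> places_with_degree s ->
  (forall v, G v != 0 -> v \in s) ->
  div_deg iota G (\sum_(p <- s) G p * (pdeg p)%:Z).
Proof.
move=> s_uniq s_places s_supp; pose p0 : F -> int := fun _ => 0.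
exists (size s), (fun i => nth p0 s i), (fun i => pdeg (nth p0 s i)).
split; [|split; [|split]].
- by move=> i j /eqP; rewrite nth_uniq // => /eqP/val_inj.
- by move=> i; have [? ?] := s_places _ (mem_nth p0 (ltn_ord i)); split; last apply: pdegP.
- move=> v /s_supp v_s; have v_lt : (index v s < size s)%N by rewrite index_mem.
  by exists (Ordinal v_lt); rewrite /= nth_index.
- by rewrite (big_nth p0) big_mkord.
Qed.

Lemma div_degD (G H : divisor F) a b : div_deg iota G a -> div_deg iota H b ->
  div_deg iota (fun v => G v + H v) (a + b).
Proof.
move=> degG degH.
have [sG [uG pG suppG]] := div_deg_support degG.
have [sH [uH pH suppH]] := div_deg_support degH.
pose s := undup (sG ++ sH).
have s_uniq : uniq s by apply: undup_uniq.
have sG_s v : G v != 0 -> v \in s by move/suppG; rewrite mem_undup mem_cat => ->.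
have sH_s v : H v != 0 -> v \in s by move/suppH; rewrite mem_undup mem_cat orbC => ->.
rewrite (div_deg_sum degG s_uniq sG_s) (div_deg_sum degH s_uniq sH_s) -big_split /=.
under eq_bigr do rewrite -mulrDl.
apply: div_deg_of_seq => //.
- by move=> p; rewrite mem_undup mem_cat => /orP[/pG|/pH].
- by move=> v; have [G0|/sG_s //] := eqVneq (G v) 0; rewrite G0 add0r => /sH_s.
Qed.

Lemma div_deg_scale (G : divisor F) k a :
  div_deg iota G a -> div_deg iota (scale_div k G) (k * a).
Proof.
case=> n [ps [ds [ps_inj [ps_deg [ps_supp ->]]]]]; exists n, ps, ds.
split=> //; split=> //; split.
- by move=> v; rewrite /scale_div mulf_eq0 negb_or => /andP[_ /ps_supp].
- by rewrite mulr_sumr; apply: eq_bigr => i _; rewrite mulrA.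
Qed.

Lemma div_degB (G H : divisor F) a b : div_deg iota G a -> div_deg iota H b ->
  div_deg iota (fun v => G v - H v) (a - b).
Proof.
move=> /div_degD degG /(div_deg_scale (-1)) /degG.
by rewrite mulN1r; congr div_deg; apply: funext => v; rewrite /scale_div mulN1r.
Qed.

Lemma div_deg_rational_places s : uniq s ->
  (forall p, p \in s -> rational_place iota p) ->
  div_deg iota (fun v => ((v \in s) : nat)%:Z) (size s)%:Z.
Proof.
move=> s_uniq s_rat.
have s_places : places_with_degree s.
  by move=> p /s_rat p_rat; split; [case: p_rat | exists 1%N; apply: rational_place_deg1].
suff -> : (size s)%:Z = \sum_(p <- s) ((p \in s) : nat)%:Z * (pdeg p)%:Z.
  by apply: div_deg_of_seq => // v; case: (v \in s).
rewrite -sum1_size -natz natr_sum big_seq [RHS]big_seq; apply: eq_bigr => p p_s.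
by rewrite p_s (pdegE (proj1 (s_rat _ p_s)) (rational_place_deg1 (s_rat _ p_s))).
Qed.

End Degree.

Lemma subspace_basis (K : finFieldType) n (W : pred 'rV[K]_n) :
  W 0 -> (forall a u u', W u -> W u' -> W (a *: u + u')) ->
  exists r (R : 'M[K]_(r, n)),
    [/\ (r <= n)%N, row_free R, forall j, W (row j R) & forall u, W u -> (u <= R)%MS].
Proof.
move=> W0 W_lin.
have W_mulmx m (M : 'M_(m, n)) x : (forall i, W (row i M)) -> W (x *m M).
  move=> W_M; rewrite mulmx_sum_row; apply: (big_ind W) => //.
    by move=> u u' Wu Wu'; rewrite -[u]scale1r; apply: W_lin.
  by move=> i _; rewrite -[_ *: _]addr0; apply: W_lin.
pose S := [seq u <- enum 'rV[K]_n | W u].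
pose M := \matrix_(i < size S) (nth 0 S i : 'rV[K]_n).
have W_M i : W (row i M).
  by rewrite rowK; have := mem_nth 0 (ltn_ord i); rewrite mem_filter => /andP[].
exists (\rank M), (row_base M); split.
- exact: rank_leq_col.
- exact: row_base_free.
- move=> j; have /submxP[x ->] : (row j (row_base M) <= M)%MS.
    by rewrite -(eq_row_base M) row_sub.
  exact: W_mulmx.
- move=> u Wu; have u_S : u \in S by rewrite mem_filter Wu mem_enum.
  have u_lt : (index u S < size S)%N by rewrite index_mem.
  by rewrite (eq_row_base M); have := row_sub (Ordinal u_lt) M; rewrite rowK nth_index.
Qed.

Section RiemannRochSpaces.
Variables (K : finFieldType) (F : fieldType) (iota : {rmorphism K -> F}).

Lemma inL_val_ge (G : divisor F) z :
  inL iota G z <-> forall v, is_place iota v -> val_ge v (- G v) z.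
Proof.
split=> [[-> v _|hz v v_place]|hz]; first by left.
  by right; have := hz v v_place; lia.
have [->|z0] := eqVneq z 0; first by left.
by right=> v /hz[/eqP|]; [rewrite (negbTE z0) | lia].
Qed.

Lemma inL_add (G : divisor F) x y : inL iota G x -> inL iota G y -> inL iota G (x + y).
Proof.
move=> /inL_val_ge hx /inL_val_ge hy; apply/inL_val_ge => v v_place.
exact: (val_geD v_place) (hx _ v_place) (hy _ v_place).
Qed.

Lemma inL_sum (G : divisor F) (I : eqType) (r : seq I) (E : I -> F) :
  (forall i, i \in r -> inL iota G (E i)) -> inL iota G (\sum_(i <- r) E i).
Proof. by move=> hE; rewrite big_seq; apply: big_ind => //; [left | apply: inL_add]. Qed.

Lemma inL_mul (G H : divisor F) x y : inL iota G x -> inL iota H y ->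
  inL iota (fun v => G v + H v) (x * y).
Proof.
move=> /inL_val_ge hx /inL_val_ge hy; apply/inL_val_ge => v v_place.
by rewrite opprD; apply: (val_geM v_place) (hx _ v_place) (hy _ v_place).
Qed.

Lemma inL_iotaM (G : divisor F) c z : inL iota G z -> inL iota G (iota c * z).
Proof.
move=> /inL_val_ge hz; apply/inL_val_ge => v v_place.
exact: (val_ge_iotaM v_place) (hz _ v_place).
Qed.

Lemma inL_sub_zeros (G : divisor F) (r : seq (F -> int)) z :
  inL iota G z -> (forall p, p \in r -> G p = 0 /\ val_ge p 1 z) ->
  inL iota (fun v => G v - ((v \in r) : nat)%:Z) z.
Proof.
move=> /inL_val_ge z_G r_zero; apply/inL_val_ge => v v_place /=.
have [/r_zero[-> z_v]|v_r] := boolP (v \in r); first by rewrite sub0r opprK.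
by rewrite subr0; apply: z_G.
Qed.

Lemma ell_mul_embed (G B : divisor F) n0 z :
  ell iota G n0 -> z != 0 -> (forall w, inL iota B w -> inL iota G (z * w)) ->
  exists n, (n <= n0)%N /\ ell iota B n.
Proof.
move=> [b [b_L [b_free b_span]]] z0 zB_G.
pose comb (u : 'rV[K]_n0) := \sum_i iota (u 0 i) * b i.
have comb_lin a u u' : comb (a *: u + u') = iota a * comb u + comb u'.
  rewrite /comb mulr_sumr -big_split; apply: eq_bigr => i _.
  by rewrite !mxE rmorphD rmorphM mulrDl mulrA.
pose W u := `[< inL iota B (comb u / z) >].
have W0 : W 0.
  by apply/asboolP; rewrite [comb 0]big1 ?mul0r => [|i _]; [left | rewrite mxE rmorph0 mul0r].
have W_lin a u u' : W u -> W u' -> W (a *: u + u').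
  move=> /asboolP Wu /asboolP Wu'; apply/asboolP.
  by rewrite comb_lin mulrDl -mulrA; apply: inL_add => //; apply: inL_iotaM.
have comb_mulmx m x (M : 'M_(m, n0)) :
    comb (x *m M) / z = \sum_j iota (x 0 j) * (comb (row j M) / z).
  rewrite /comb; under eq_bigr => i _ do rewrite mxE rmorph_sum mulr_suml.
  rewrite exchange_big mulr_suml; apply: eq_bigr => j _; rewrite !mulr_suml mulr_sumr.
  by apply: eq_bigr => i _; rewrite !mxE rmorphM !mulrA.
have comb_inj u : comb u = 0 -> u = 0.
  by move=> /b_free u0; apply/rowP => i; rewrite u0 mxE.
have [r [R [r_le R_free W_R R_span]]] := subspace_basis W0 W_lin.
exists r; split=> //; exists (fun j => comb (row j R) / z); split; [|split].
- by move=> j; apply/asboolP/W_R.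
- move=> c hc; pose x := \row_j c j.
  have : comb (x *m R) / z = 0.
    by rewrite -{}[RHS]hc comb_mulmx; apply: eq_bigr => j _; rewrite mxE.
  move/eqP; rewrite mulf_eq0 invr_eq0 (negbTE z0) orbF => /eqP/comb_inj/eqP.
  by rewrite mulmx_free_eq0 // => /eqP/rowP x0 j; have := x0 j; rewrite !mxE.
- move=> w w_B; have [c hc] := b_span _ (zB_G _ w_B); pose u := \row_i c i.
  have u_w : comb u / z = w.
    apply: (mulfI z0); rewrite mulrC divfK // hc.
    by apply: eq_bigr => i _; rewrite mxE.
  have /R_span/submxP[x u_x] : W u by apply/asboolP; rewrite u_w.
  by exists (fun j => x 0 j); rewrite -u_w u_x comb_mulmx.
Qed.

Lemma inL_negdeg_eq0 g (G : divisor F) a z : is_genus iota g ->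
  div_deg iota G a -> a < 0 -> inL iota G z -> z = 0.
Proof.
move=> [[G0 [a0 [n0 [degG0 [ellG0 genusG0]]]]] genus_max] degG a_lt0 z_G.
apply/eqP/negPn/negP => z0.
have [n [n_le ellB]] : exists n, (n <= n0)%N /\ ell iota (fun v => G0 v - G v) n.
  apply: (ell_mul_embed ellG0 z0) => w w_B.
  by have := inL_mul z_G w_B; congr inL; apply: funext => v; rewrite addrC subrK.
have := genus_max _ _ _ (div_degB degG0 degG) ellB.
by move: genusG0 a_lt0 n_le; lia.
Qed.

End RiemannRochSpaces.

Section TwistedCombination.
Variables (K : finFieldType) (F : fieldType) (iota : {rmorphism K -> F}).
Variables (sigma : {rmorphism F -> F}) (tau : F -> F).
Hypotheses (sigmaK : cancel sigma tau) (tauK : cancel tau sigma)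
  (sigma_iota : forall c : K, sigma (iota c) = iota c).
Variable D : divisor F.
Hypothesis D_inv : forall v, is_place iota v -> D (fun z => v (tau z)) = D v.

(* The place Q^(sigma^n), whose valuation is v_Q o tau^n. *)
Local Notation twist Q n := (fun z => Q (iter n tau z)).

Lemma inL_iter_tau k f n : inL iota (scale_div k D) f -> inL iota (scale_div k D) (iter n tau f).
Proof.
move=> /inL_val_ge f_L; apply/inL_val_ge => v v_place.
apply: (val_ge_iter_tau (a := 0) sigmaK tauK).
have := f_L _ (place_iter_tau sigmaK tauK sigma_iota n v_place).
by rewrite /scale_div (div_iter_tau sigmaK tauK sigma_iota D_inv n v_place).
Qed.

Lemma inL_twisted_comb (k l : int) s A0 A f :
  inL iota (scale_div (k + l) D) A0 ->
  (forall j, (1 <= j <= s)%N -> inL iota (scale_div k D) (A j)) ->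
  inL iota (scale_div l D) f ->
  inL iota (scale_div (k + l) D) (A0 + \sum_(1 <= j < s.+1) A j * iter j.-1 tau f).
Proof.
move=> A0_L A_L f_L; apply: inL_add A0_L (inL_sum _) => j; rewrite mem_index_iota => j_s.
have := inL_mul (A_L j j_s) (inL_iter_tau j.-1 f_L).
by congr inL; apply: funext => v; rewrite /scale_div mulrDl.
Qed.

Lemma is_residue_twisted_comb (Q : F -> int) (yQ : nat -> K) j s (a b c : int) A0 A f :
  (0 < s)%N ->
  (forall k, (k < s)%N ->
     rational_place iota (twist Q (j + k)) /\ D (twist Q (j + k)) = 0) ->
  (forall k, (k < s)%N -> yQ (j + k)%N = residue iota (twist Q (j + k)) f) ->
  inL iota (scale_div a D) A0 ->
  (forall k, (1 <= k <= s)%N -> inL iota (scale_div b D) (A k)) ->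
  inL iota (scale_div c D) f ->
  is_residue iota (twist Q j) (A0 + \sum_(1 <= k < s.+1) A k * iter k.-1 tau f)
    (residue iota (twist Q j) A0 +
     \sum_(1 <= k < s.+1) residue iota (twist Q j) (A k) * yQ (j + k - 1)%N).
Proof.
move=> s_gt0 Q_rat y_res A0_L A_L f_L.
have L_ge0 k d z : (k < s)%N -> inL iota (scale_div d D) z -> val_ge (twist Q (j + k)) 0 z.
  move=> k_s /inL_val_ge z_L; have [[v_place _] D0] := Q_rat k k_s.
  by have := z_L _ v_place; rewrite /scale_div D0 mulr0 oppr0.
have [Qj_rat _] := Q_rat 0%N s_gt0; rewrite addn0 in Qj_rat.
have Qj_ge0 d z : inL iota (scale_div d D) z -> val_ge (twist Q j) 0 z.
  by move/(L_ge0 0%N _ _ s_gt0); rewrite addn0.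
apply: (is_residueD (proj1 Qj_rat) (residueP Qj_rat (Qj_ge0 _ _ A0_L))).
apply: (is_residue_sum (proj1 Qj_rat)) => k; rewrite mem_index_iota => k_s.
have k1_s : (k.-1 < s)%N by lia.
have -> : (j + k - 1 = j + k.-1)%N by lia.
apply: (is_residueM (proj1 Qj_rat) _ (residueP Qj_rat (Qj_ge0 _ _ (A_L k k_s)))).
  exact: (val_ge_iter_tau sigmaK tauK) (L_ge0 _ _ _ k1_s f_L).
apply: (is_residue_iter_tau sigmaK tauK sigma_iota); rewrite y_res //.
exact: residueP (proj1 (Q_rat _ k1_s)) (L_ge0 _ _ _ k1_s f_L).
Qed.

Lemma twist_placesP N (P : 'I_N -> F -> int) (S : {set 'I_N}) b q :
  q \in [seq twist (P i) j | i <- enum S, j <- index_iota 0 b] ->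
  exists i j, [/\ i \in S, (j < b)%N & q = twist (P i) j].
Proof.
case/allpairsP=> -[i j] [i_S j_b ->]; exists i, j.
by move: i_S j_b; rewrite mem_enum mem_index_iota.
Qed.

Lemma twist_places_uniq N m (P : 'I_N -> F -> int) (S : {set 'I_N}) b :
  (b <= m)%N ->
  (forall i i' (j j' : 'I_m), twist (P i) j = twist (P i') j' -> i = i' /\ j = j') ->
  uniq [seq twist (P i) j | i <- enum S, j <- index_iota 0 b].
Proof.
move=> b_m P_inj; apply: allpairs_uniq; [exact: enum_uniq | exact: iota_uniq |].
move=> _ _ /allpairsP[[i j] [_ + ->]] /allpairsP[[i' j'] [_ + ->]] /=.
rewrite !mem_index_iota /= => j_b j'_b eq_twist.
have [j_m j'_m] : (j < m)%N /\ (j' < m)%N by lia.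
by have [-> [->]] := P_inj i i' (Ordinal j_m) (Ordinal j'_m) eq_twist.
Qed.

End TwistedCombination.

Theorem lemma2p4
  (K : finFieldType) (F : fieldType) (iota : {rmorphism K -> F}) (g : nat)
  (sigma : {rmorphism F -> F}) (tau : F -> F)
  (N m l : nat) (P : 'I_N -> (F -> int)) (D : (F -> int) -> int) (e : int)
  (s : nat) (y : 'I_N -> m.-tuple K) (A0 : F) (A : nat -> F) (f : F) (t : nat) :
  is_function_field iota -> full_constant_field iota -> is_genus iota g ->
  (* sigma is an automorphism of F/F_q with inverse tau *)
  cancel sigma tau -> cancel tau sigma -> (forall c : K, sigma (iota c) = iota c) ->
  (0 < N)%N -> (0 < m)%N -> (0 < l)%N ->
  (* P_i^{sigma^j} has valuation v_{P_i} o tau^j; these mN places are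
     pairwise distinct rational places *)
  (forall i (j : 'I_m), rational_place iota (fun z => P i (iter j tau z))) ->
  (forall i i' (j j' : 'I_m),
      (fun z => P i (iter j tau z)) = (fun z => P i' (iter j' tau z)) ->
      i = i' /\ j = j') ->
  div_deg iota D e ->
  (* D^sigma = D *)
  (forall v, is_place iota v -> D (fun z => v (tau z)) = D v) ->
  (forall i (j : 'I_m), D (fun z => P i (iter j tau z)) = 0) ->
  (1 <= s <= m)%N ->
  inL iota (scale_div (kappa N m l s g e + l%:Z) D) A0 ->
  (forall k, (1 <= k <= s)%N -> inL iota (scale_div (kappa N m l s g e) D) (A k)) ->
  (forall i (j : nat), (j <= m - s)%N ->
     residue iota (fun z => P i (iter j tau z)) A0 +
     \sum_(1 <= k < s.+1)
        residue iota (fun z => P i (iter j tau z)) (A k) * nth (0%R : K) (tuple.tval (y i)) (j + k - 1)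
     = 0) ->
  inL iota (scale_div l%:Z D) f ->
  (t <= #|[set i : 'I_N | [forall j : 'I_m,
             nth (0%R : K) (tuple.tval (y i)) j == residue iota (fun z => P i (iter j tau z)) f]]|)%N ->
  ((kappa N m l s g e + l%:Z) * e)%:~R / (m - s + 1)%:R < (t%:R : rat) ->
  A0 + \sum_(1 <= k < s.+1) A k * iter k.-1 tau f = 0.
Proof.
move=> _ _ genus sigmaK tauK sigma_iota _ _ _ P_rat P_inj degD D_inv D_off
  /andP[s_gt0 s_le_m] A0_L A_L res_y f_L t_le t_gt.
set S := [set i | _] in t_le.
pose Q := [seq (fun z => P i (iter j tau z)) | i <- enum S, j <- index_iota 0 (m - s).+1].
have P_twist i j k : (j < (m - s).+1)%N -> (k < s)%N ->
    rational_place iota (fun z => P i (iter (j + k) tau z)) /\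
    D (fun z => P i (iter (j + k) tau z)) = 0.
  move=> j_s k_s; have jk_m : (j + k < m)%N by lia.
  by split; [apply: (P_rat i (Ordinal jk_m)) | apply: (D_off i (Ordinal jk_m))].
have Q_uniq : uniq Q by apply: twist_places_uniq P_inj; lia.
have Q_rat q : q \in Q -> rational_place iota q.
  case/twist_placesP=> i [j [_ j_s ->]].
  by have := P_twist i j 0%N j_s s_gt0; rewrite addn0 => -[].
apply: (inL_negdeg_eq0 genus (div_degB (div_deg_scale (kappa N m l s g e + l%:Z) degD)
                                      (div_deg_rational_places Q_uniq Q_rat))).
- rewrite size_allpairs size_iota -cardE subn0.
  move: t_gt; rewrite ltr_pdivrMr ?ltr0n ?addn1 // -natrM pmulrn ltr_int.
  by have := leq_mul t_le (leqnn (m - s).+1); lia.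
- apply: inL_sub_zeros; first exact: (inL_twisted_comb sigmaK tauK sigma_iota D_inv).
  move=> q /twist_placesP[i [j [i_S j_s ->]]].
  have [_ D0] := P_twist i j 0%N j_s s_gt0; rewrite addn0 in D0.
  split; first by rewrite /scale_div D0 mulr0.
  have agree k : (k < s)%N ->
      nth 0 (tuple.tval (y i)) (j + k) = residue iota (fun z => P i (iter (j + k) tau z)) f.
    move=> k_s; have jk_m : (j + k < m)%N by lia.
    by move: i_S; rewrite inE => /forallP/(_ (Ordinal jk_m))/eqP.
  have := is_residue_twisted_comb sigmaK tauK sigma_iota (yQ := nth 0 (tuple.tval (y i)))
    s_gt0 (fun k => P_twist i j k j_s) agree A0_L A_L f_L.
  by rewrite /is_residue res_y // rmorph0 subr0.
Qed.
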